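(* Let $X$ be a fake weighted projective plane with weights $(\lambda_0,\lambda_1,\lambda_2)$, and suppose there exists a one-step mutation from $X$ to a fake weighted projective plane $Y$. Then, after relabelling the weights, $\lambda_0$ divides $(\lambda_1+\lambda_2)^2$ and $Y$ has weights $$\left(\lambda_1,\lambda_2,\frac{(\lambda_1+\lambda_2)^2}{\lambda_0}\right).$$
   Context: Let $N\cong\mathbb{Z}^2$ be a lattice, $M=\mathrm{Hom}(N,\mathbb{Z})$ its dual, $N_\mathbb{Q}=N\otimes_\mathbb{Z}\mathbb{Q}$. A Fano polygon is a two-dimensional convex lattice polygon $P\subset N_\mathbb{Q}$ containing the origin in its interior whose vertices are primitive lattice points. For primitive $w\in M$ and $h\in\mathbb{Z}$ put $H_{w,h}=\{v\in N_\mathbb{Q}: w(v)=h\}$, $w_h(P)=\mathrm{conv}(H_{w,h}\cap P\cap N)$ (possibly empty), $h_{\min}=\min_{v\in P}w(v)$, $h_{\max}=\max_{v\in P}w(v)$. A factor of $P$ with respect to $w$ is a lattice polytope $F\subset N_\mathbb{Q}$ with $w(F)=\{0\}$ such that for each integer $h$ with $h_{\min}\le h<0$ there is a (possibly empty) lattice polytope $G_h\subset H_{w,h}$ with $H_{w,h}\cap \mathrm{V}(P)\subseteq G_h+(-h)F\subseteq w_h(P)$, where $\mathrm{V}(P)$ is the vertex set and $+$ is Minkowski sum. The (combinatorial) mutation is $\mathrm{mut}_w(P,F)=\mathrm{conv}\big(\bigcup_{h=h_{\min}}^{-1}G_h\cup\bigcup_{h=0}^{h_{\max}}(w_h(P)+hF)\big)$;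 up to automorphisms of $N$ it does not depend on the choice of the $G_h$, and it is again a Fano polygon. Polygons are isomorphic ($\cong$) if related by an automorphism of $N$. A Fano triangle $P=\mathrm{conv}(v_0,v_1,v_2)$ determines the toric surface $X_P$ whose fan consists of the cones over the faces of $P$; such a surface is a fake weighted projective plane. Its weights are the unique positive integers $\lambda_0,\lambda_1,\lambda_2$ with $\gcd(\lambda_0,\lambda_1,\lambda_2)=1$ and $\lambda_0v_0+\lambda_1v_1+\lambda_2v_2=0$; they are well-formed, i.e. pairwise coprime. A fake weighted projective plane $Y=X_Q$ is obtained from $X=X_P$ by a one-step mutation if $Q\cong\mathrm{mut}_w(P,F)$ for some primitive $w\in M$ and some factor $F$ of $P$ with respect to $w$. *)

(* Lattice N = Z^2 (pairs of ints), N_Q = Q^2 (pairs of rats). *)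
From HB Require Import structures.
From mathcomp Require Import all_boot all_order all_algebra.
Set Implicit Arguments. Unset Strict Implicit. Unset Printing Implicit Defensive.
Import Order.TTheory GRing.Theory Num.Theory.
Local Open Scope ring_scope.

Definition lpt := (int * int)%type.          (* lattice points of N (and of M) *)
Definition qpt := (rat * rat)%type.
Definition region := qpt -> Prop.

Definition emb (v : lpt) : qpt := (v.1%:~R, v.2%:~R).
Definition qadd (x y : qpt) : qpt := (x.1 + y.1, x.2 + y.2).
Definition qscale (k : rat) (x : qpt) : qpt := (k * x.1, k * x.2).

Definition in_hull (s : seq qpt) (x : qpt) : Prop :=
  exists c : seq rat,
    size c = size s /\ all (fun t => 0 <= t) c /\ \sum_(t <- c) t = 1 /\
    x = (\sum_(i < size s) c`_i * (nth (0, 0) s i).1,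
         \sum_(i < size s) c`_i * (nth (0, 0) s i).2).

Definition conv (A : region) : region :=
  fun x => exists s : seq qpt, (forall y, y \in s -> A y) /\ in_hull s x.

Definition conv_pts (s : seq lpt) : region := in_hull (map emb s).

Definition msum (A B : region) : region :=
  fun x => exists a b, A a /\ B b /\ x = qadd a b.
Definition dil (k : rat) (A : region) : region :=
  fun x => exists a, A a /\ x = qscale k a.
Definition subset_r (A B : region) : Prop := forall x, A x -> B x.

Definition primitive (v : lpt) : Prop := gcdz v.1 v.2 = 1.

(* pairing M x N_Q -> Q, and M x N -> Z *)
Definition pairing (w : lpt) (x : qpt) : rat := w.1%:~R * x.1 + w.2%:~R * x.2.
Definition wval (w v : lpt) : int := w.1 * v.1 + w.2 * v.2.

Definition is_lattice (x : qpt) : Prop := exists v : lpt, x = emb v.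

Definition slice (P : region) (w : lpt) (h : int) : region :=
  conv (fun x => P x /\ is_lattice x /\ pairing w x = h%:~R).

Definition triangle (v0 v1 v2 : lpt) : region := conv_pts [:: v0; v1; v2].

Definition origin_interior (P : region) : Prop :=
  exists e : rat, 0 < e /\
    forall x : qpt, `|x.1| <= e -> `|x.2| <= e -> P x.

(* Fano triangle with vertices v0 v1 v2 (interiority forces these to be the
   three vertices of the triangle) *)
Definition fano_triangle (v0 v1 v2 : lpt) : Prop :=
  [/\ primitive v0, primitive v1, primitive v2 &
      origin_interior (triangle v0 v1 v2)].

(* weights of the fake weighted projective plane X_P, P = conv(v0,v1,v2) *)
Definition weights (v0 v1 v2 : lpt) (l0 l1 l2 : nat) : Prop :=
  [/\ (0 < l0)%N, (0 < l1)%N, (0 < l2)%N & gcdn l0 (gcdn l1 l2) = 1%N] /\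
  l0%:Z * v0.1 + l1%:Z * v1.1 + l2%:Z * v2.1 = 0 /\
  l0%:Z * v0.2 + l1%:Z * v1.2 + l2%:Z * v2.2 = 0.

Definition lin_img (a b c d : int) (A : region) : region :=
  fun x => exists y, A y /\
    x = (a%:~R * y.1 + b%:~R * y.2, c%:~R * y.1 + d%:~R * y.2).
Definition iso (P Q : region) : Prop :=
  exists a b c d : int, (a * d - b * c = 1 \/ a * d - b * c = -1) /\
    forall x, lin_img a b c d P x <-> Q x.

(* h_min and h_max of w on the triangle conv(v0,v1,v2) (attained at vertices) *)
Definition hmin (w v0 v1 v2 : lpt) : int :=
  Num.min (wval w v0) (Num.min (wval w v1) (wval w v2)).
Definition hmax (w v0 v1 v2 : lpt) : int :=
  Num.max (wval w v0) (Num.max (wval w v1) (wval w v2)).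

(* F = conv_pts sF is a factor of P = conv(v0,v1,v2) w.r.t. w, with the
   lattice polytopes G_h = conv_pts (G h) as witnesses *)
Definition factor_with (v0 v1 v2 w : lpt) (sF : seq lpt) (G : int -> seq lpt)
  : Prop :=
  sF != [::] /\ (forall f, f \in sF -> wval w f = 0) /\
  forall h : int, hmin w v0 v1 v2 <= h < 0 ->
    [/\ (forall g, g \in G h -> wval w g = h),
        (forall v, v \in [:: v0; v1; v2] -> wval w v = h ->
           msum (conv_pts (G h)) (dil (- h%:~R) (conv_pts sF)) (emb v)) &
        subset_r (msum (conv_pts (G h)) (dil (- h%:~R) (conv_pts sF)))
                 (slice (triangle v0 v1 v2) w h)].

Definition mutation (v0 v1 v2 w : lpt) (sF : seq lpt) (G : int -> seq lpt)
  : region :=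
  conv (fun x =>
    (exists h : int, hmin w v0 v1 v2 <= h < 0 /\ conv_pts (G h) x) \/
    (exists h : int, 0 <= h <= hmax w v0 v1 v2 /\
       msum (slice (triangle v0 v1 v2) w h) (dil h%:~R (conv_pts sF)) x)).

(* the factor is not a single point (otherwise the mutation is trivial) *)
Definition nontrivial (sF : seq lpt) : Prop :=
  exists f1 f2, [/\ f1 \in sF, f2 \in sF & f1 != f2].

Definition one_step_mutation (v0 v1 v2 u0 u1 u2 : lpt) : Prop :=
  exists (w : lpt) (sF : seq lpt) (G : int -> seq lpt),
    [/\ primitive w, factor_with v0 v1 v2 w sF G, nontrivial sF &
        iso (mutation v0 v1 v2 w sF G) (triangle u0 u1 u2)].

From HB Require Import structures.
From mathcomp Require Import all_boot all_order all_algebra.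
From mathcomp Require Import ring lra zify.
From Stdlib Require Import FunctionalExtensionality PropExtensionality.
Set Implicit Arguments. Unset Strict Implicit. Unset Printing Implicit Defensive.
Import Order.TTheory GRing.Theory Num.Theory.
Local Open Scope ring_scope.

(* Let P = conv(v0, v1, v2) be the Fano triangle, w the primitive grading and F
   a factor with at least two lattice points.  Since the origin is interior to
   P, w takes both signs on the vertices; its minimum is not attained at a
   single vertex, because the slice of P there is a point and cannot contain a
   translate of a dilate of F (no_unique_minimum).  So after relabelling
   w(v1) = w(v2) = -r < 0 < h = w(v0) (relabel_pair_minimum).  In coordinates
   given by w and the edge direction v2 - v1, the mutation is cut out by four
   affine inequalities and has the four exposed corners v1 - r fa, v2 - r fb,
   v0 + h fa, v0 + h fb, where fa, fb are the extreme points of F along the edge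
   (section PairMinimum).  The mutation is GL2(Z)-equivalent to a triangle,
   whose exposed points are its three vertices, so v1 - r fa = v2 - r fb and
   the remaining three corners map to the vertices.  The weight relation of P
   then gives the relation ((l1 + l2)^2, l0 l1, l0 l2) among these corners,
   and comparing it with the weights of the target triangle (unique up to
   scaling) gives the claim (pair_minimum_weights). *)
Definition affine (phi : qpt -> rat) : Prop :=
  exists a b k : rat, forall z, phi z = a * z.1 + b * z.2 + k.

Lemma affine_ext (f g : qpt -> rat) : (forall x, f x = g x) -> affine g -> affine f.
Proof. by move=> E [a [b [k H]]]; exists a, b, k => z; rewrite E H. Qed.

Lemma affine_cst (k : rat) : affine (fun _ => k).
Proof. by exists 0, 0, k => z; ring. Qed.

Lemma affine_pair (w : lpt) : affine (pairing w).
Proof. by exists w.1%:~R, w.2%:~R, 0 => z; rewrite /pairing; ring. Qed.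

Lemma affine_add (f g : qpt -> rat) :
  affine f -> affine g -> affine (fun z => f z + g z).
Proof.
move=> [a [b [k H]]] [a' [b' [k' H']]].
by exists (a + a'), (b + b'), (k + k') => z; rewrite H H'; ring.
Qed.

Lemma affine_scale (c : rat) (f : qpt -> rat) : affine f -> affine (fun z => c * f z).
Proof.
by move=> [a [b [k H]]]; exists (c * a), (c * b), (c * k) => z; rewrite H; ring.
Qed.

Lemma affine_opp (f : qpt -> rat) : affine f -> affine (fun z => - f z).
Proof.
by move=> Hf; apply: (affine_ext _ (affine_scale (-1) Hf)) => z; rewrite mulN1r.
Qed.

Lemma affine_sub (f g : qpt -> rat) :
  affine f -> affine g -> affine (fun z => f z - g z).
Proof. by move=> Hf Hg; apply: affine_add => //; apply: affine_opp. Qed.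

Lemma affine_pairings (w d : lpt) (c1 c2 c3 : rat) :
  affine (fun x => c1 * pairing w x + c2 * pairing d x + c3).
Proof.
by apply: affine_add (affine_cst _); apply: affine_add; apply: affine_scale; apply: affine_pair.
Qed.

Lemma pairing_emb (w v : lpt) : pairing w (emb v) = (wval w v)%:~R.
Proof. by rewrite /pairing /wval /emb /= intrD !intrM. Qed.

Lemma pairing_qadd (w : lpt) (x y : qpt) :
  pairing w (qadd x y) = pairing w x + pairing w y.
Proof. by rewrite /pairing /qadd /=; ring. Qed.

Lemma pairing_qscale (w : lpt) (k : rat) (x : qpt) :
  pairing w (qscale k x) = k * pairing w x.
Proof. by rewrite /pairing /qscale /=; ring. Qed.

(* An affine function nonnegative on finitely many points is nonnegative on
   their convex hull: it commutes with convex combinations. *)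
Lemma hull_ge0 (phi : qpt -> rat) (s : seq qpt) (x : qpt) :
  affine phi -> in_hull s x -> (forall y, y \in s -> 0 <= phi y) -> 0 <= phi x.
Proof.
move=> [a [b [k Hphi]]] [c [Hsz [Hc [Hs1 ->]]]] Hy.
have Hs : \sum_(i < size s) c`_i = 1 by rewrite -Hsz -Hs1 (big_nth 0) big_mkord.
have -> : phi (\sum_(i < size s) c`_i * (nth (0, 0) s i).1,
               \sum_(i < size s) c`_i * (nth (0, 0) s i).2)
          = \sum_(i < size s) c`_i * phi (nth (0, 0) s i).
  rewrite Hphi /= !mulr_sumr -[k]mulr1 -Hs mulr_sumr -!big_split /=.
  by apply: eq_bigr => i _; rewrite Hphi; ring.
apply: sumr_ge0 => i _; apply: mulr_ge0; last by apply: Hy; apply: mem_nth.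
by move/all_nthP: Hc; apply; rewrite Hsz.
Qed.

Lemma hull_eq0 (phi : qpt -> rat) (s : seq qpt) (x : qpt) :
  affine phi -> in_hull s x -> (forall y, y \in s -> phi y = 0) -> phi x = 0.
Proof.
move=> Ha Hx Hy; apply/eqP; rewrite eq_le; apply/andP; split.
  rewrite -oppr_ge0; apply: (hull_ge0 (affine_opp Ha) Hx) => y /Hy ->.
  by rewrite oppr0.
by apply: (hull_ge0 Ha Hx) => y /Hy ->.
Qed.

Lemma conv_ge0 (phi : qpt -> rat) (A : region) (x : qpt) :
  affine phi -> conv A x -> (forall y, A y -> 0 <= phi y) -> 0 <= phi x.
Proof. by move=> Ha [s [Hs Hx]] Hy; apply: (hull_ge0 Ha Hx) => y /Hs; apply: Hy. Qed.

Lemma conv_eq0 (phi : qpt -> rat) (A : region) (x : qpt) :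
  affine phi -> conv A x -> (forall y, A y -> phi y = 0) -> phi x = 0.
Proof. by move=> Ha [s [Hs Hx]] Hy; apply: (hull_eq0 Ha Hx) => y /Hs; apply: Hy. Qed.

Lemma conv_pts_ge0 (phi : qpt -> rat) (s : seq lpt) (x : qpt) :
  affine phi -> conv_pts s x -> (forall v, v \in s -> 0 <= phi (emb v)) -> 0 <= phi x.
Proof. by move=> Ha Hx H; apply: (hull_ge0 Ha Hx) => y /mapP [v Hv ->]; apply: H. Qed.

Lemma conv_pts_eq0 (phi : qpt -> rat) (s : seq lpt) (x : qpt) :
  affine phi -> conv_pts s x -> (forall v, v \in s -> phi (emb v) = 0) -> phi x = 0.
Proof. by move=> Ha Hx H; apply: (hull_eq0 Ha Hx) => y /mapP [v Hv ->]; apply: H. Qed.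

Lemma conv_pts_level (w : lpt) (s : seq lpt) (h : int) (x : qpt) :
  conv_pts s x -> (forall v, v \in s -> wval w v = h) -> pairing w x = h%:~R.
Proof.
move=> Hx Hs; apply/eqP; rewrite -subr_eq0; apply/eqP.
apply: (conv_pts_eq0 (affine_sub (affine_pair w) (affine_cst _)) Hx) => v /Hs Hv.
by rewrite pairing_emb Hv subrr.
Qed.

Lemma slice_level (P : region) (w : lpt) (h : int) (x : qpt) :
  slice P w h x -> pairing w x = h%:~R.
Proof.
move=> Hx; apply/eqP; rewrite -subr_eq0; apply/eqP.
apply: (conv_eq0 (affine_sub (affine_pair w) (affine_cst _)) Hx) => y [_ [_ ->]].
exact: subrr.
Qed.

Lemma hull_mem (s : seq qpt) (y : qpt) : y \in s -> in_hull s y.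
Proof.
move=> Hy; set j := index y s.
have Hj : (j < size s)%N by rewrite index_mem.
exists [seq (i == j)%:R | i <- iota 0 (size s)].
rewrite size_map size_iota; split=> //; split.
  by apply/allP => t /mapP [i _ ->]; rewrite ler0n.
have Hn i : (i < size s)%N -> [seq (i == j)%:R | i <- iota 0 (size s)]`_i = (i == j)%:R :> rat.
  by move=> Hi; rewrite (nth_map 0%N) ?size_iota // nth_iota.
have Hoff (i : 'I_(size s)) : i != Ordinal Hj -> ((i : nat) == j)%:R = 0 :> rat.
  by move=> /eqP Hi; case: eqP => // Hij; case: Hi; apply: val_inj.
split.
  rewrite (big_nth 0) big_mkord size_map size_iota (bigD1 (Ordinal Hj)) //=.
  rewrite (Hn j Hj) eqxx big1 ?addr0 // => i /Hoff.
  by rewrite (Hn _ (ltn_ord i)).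
rewrite (bigD1 (Ordinal Hj)) // [X in (_, X)](bigD1 (Ordinal Hj)) //=.
rewrite !(Hn j Hj) /= eqxx !mul1r !big1 ?addr0 ?nth_index //; first by case: y Hy {Hj Hn Hoff j}.
all: by move=> i /Hoff; rewrite (Hn _ (ltn_ord i)) => ->; rewrite mul0r.
Qed.

Lemma conv_in (A : region) (x : qpt) : A x -> conv A x.
Proof.
move=> Ax; exists [:: x]; split; first by move=> y; rewrite inE => /eqP ->.
by apply: hull_mem; rewrite mem_head.
Qed.

Lemma conv_pts_mem (s : seq lpt) (v : lpt) : v \in s -> conv_pts s (emb v).
Proof. by move=> Hv; apply: hull_mem; apply: map_f. Qed.

Lemma in_hull3 (a b c x : qpt) :
  in_hull [:: a; b; c] x <->
  exists c0 c1 c2 : rat, [/\ 0 <= c0, 0 <= c1, 0 <= c2, c0 + c1 + c2 = 1 &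
    x = (c0 * a.1 + c1 * b.1 + c2 * c.1, c0 * a.2 + c1 * b.2 + c2 * c.2)].
Proof.
split.
  move=> [cs [Hsz [Hc [Hs ->]]]].
  case: cs Hsz Hc Hs => [|c0 [|c1 [|c2 [|? ?]]]] //= _.
  rewrite !big_cons big_nil /= => /and4P [h0 h1 h2 _] Hs.
  exists c0, c1, c2; split => //; first by rewrite -Hs; ring.
  by rewrite !big_ord_recr !big_ord0 /=; congr pair; ring.
move=> [c0 [c1 [c2 [h0 h1 h2 Hs ->]]]].
exists [:: c0; c1; c2]; split => //; split; first by rewrite /= h0 h1 h2.
split; first by rewrite !big_cons big_nil -Hs; ring.
by rewrite !big_ord_recr !big_ord0 /=; congr pair; ring.
Qed.

Lemma seq_argmin (T : eqType) (f : T -> rat) (s : seq T) : s != [::] ->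
  exists2 x, x \in s & forall y, y \in s -> f x <= f y.
Proof.
elim: s => [//|a s IH] _; case: s IH => [|b s] IH.
  by exists a => [|y]; rewrite ?inE ?eqxx // => /eqP ->.
have [x Hx Hm] := IH isT; case: (leP (f a) (f x)) => H.
  exists a; first exact: mem_head.
  by move=> y; rewrite inE => /orP [/eqP ->//|/Hm]; apply: le_trans.
exists x; first by rewrite inE Hx orbT.
by move=> y; rewrite inE => /orP [/eqP ->|/Hm //]; apply: ltW.
Qed.

Lemma seq_argmax (T : eqType) (f : T -> rat) (s : seq T) : s != [::] ->
  exists2 x, x \in s & forall y, y \in s -> f y <= f x.
Proof.
by move=> /(seq_argmin (fun t => - f t)) [x Hx Hm]; exists x => // y /Hm; rewrite lerN2.
Qed.

Definition lmap (a b c d : int) (y : qpt) : qpt :=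
  (a%:~R * y.1 + b%:~R * y.2, c%:~R * y.1 + d%:~R * y.2).

Lemma lmap_inj (a b c d : int) (x y : qpt) :
  a * d - b * c != 0 -> lmap a b c d x = lmap a b c d y -> x = y.
Proof.
move=> Hd; have Hq : (a%:~R * d%:~R - b%:~R * c%:~R : rat) != 0.
  by rewrite -!intrM -intrB intr_eq0.
case: x => x1 x2; case: y => y1 y2; rewrite /lmap /= => [[E1 E2]].
congr pair; apply: (mulIf Hq); apply/eqP; rewrite -subr_eq0; apply/eqP.
  transitivity (d%:~R * (a%:~R * x1 + b%:~R * x2 - (a%:~R * y1 + b%:~R * y2))
     - b%:~R * (c%:~R * x1 + d%:~R * x2 - (c%:~R * y1 + d%:~R * y2)) : rat); first ring.
  by rewrite E1 E2 !subrr; ring.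
transitivity (a%:~R * (c%:~R * x1 + d%:~R * x2 - (c%:~R * y1 + d%:~R * y2))
   - c%:~R * (a%:~R * x1 + b%:~R * x2 - (a%:~R * y1 + b%:~R * y2)) : rat); first ring.
by rewrite E1 E2 !subrr; ring.
Qed.

Lemma emb_inj : injective emb.
Proof. by move=> [a b] [c d] [/intr_inj -> /intr_inj ->]. Qed.

Lemma primitive_neq0 (w : lpt) : primitive w -> w <> (0, 0).
Proof. by case: w => w1 w2; rewrite /primitive => /= + [E1 E2]; rewrite E1 E2. Qed.

Lemma sqsum_gt0 (a b : int) : (a, b) <> (0, 0) -> 0 < a * a + b * b.
Proof.
move=> Hab; case: (a =P 0) => [Ea|/eqP Na].
  case: (b =P 0) => [Eb|/eqP Nb]; first by case: Hab; rewrite Ea Eb.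
  by rewrite Ea mul0r add0r lt0r sqr_ge0 mulf_neq0.
by apply: ltr_pwDl; rewrite ?sqr_ge0 // lt0r sqr_ge0 mulf_neq0.
Qed.

(* Two nonzero orthogonal vectors of M are linearly independent (Lagrange's
   identity), so the pairings with them determine a point of N_Q. *)
Lemma orthogonal_det_neq0 (w d : lpt) :
  w <> (0, 0) -> d <> (0, 0) -> wval w d = 0 -> w.1 * d.2 - w.2 * d.1 != 0.
Proof.
case: w => w1 w2; case: d => d1 d2; rewrite /wval /= => /sqsum_gt0 Hw /sqsum_gt0 Hd Hwd.
apply/eqP => Hdet; have := mulr_gt0 Hw Hd.
have -> : (w1 * w1 + w2 * w2) * (d1 * d1 + d2 * d2)
        = (w1 * d2 - w2 * d1) ^+ 2 + (w1 * d1 + w2 * d2) ^+ 2 by ring.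
by rewrite Hdet Hwd expr0n addr0 ltxx.
Qed.

Lemma pairings_inj (w d : lpt) (x y : qpt) :
  w <> (0, 0) -> d <> (0, 0) -> wval w d = 0 ->
  pairing w x = pairing w y -> pairing d x = pairing d y -> x = y.
Proof.
move=> Hw Hd Hwd Ew Ed; apply: (lmap_inj (orthogonal_det_neq0 Hw Hd Hwd)).
by rewrite /lmap -/(pairing w x) -/(pairing d x) Ew Ed.
Qed.

Definition exposed (R : region) (Y : qpt) : Prop :=
  R Y /\ exists phi, [/\ affine phi, phi Y = 0, (forall z, R z -> phi z <= 0) &
                        (forall z, R z -> phi z = 0 -> z = Y)].

Lemma exposed_of (R : region) (s1 s2 : qpt -> rat) (X : qpt) :
  affine s1 -> affine s2 -> (forall z, R z -> 0 <= s1 z) -> (forall z, R z -> 0 <= s2 z) ->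
  R X -> s1 X = 0 -> s2 X = 0 -> (forall z, s1 z = 0 -> s2 z = 0 -> z = X) ->
  exposed R X.
Proof.
move=> A1 A2 H1 H2 RX E1 E2 U; split => //.
exists (fun z => - (s1 z + s2 z)); split.
- by apply: affine_opp; apply: affine_add.
- by rewrite E1 E2 addr0 oppr0.
- by move=> z Rz; rewrite oppr_le0 addr_ge0 ?H1 ?H2.
- move=> z Rz E; have h1 := H1 z Rz; have h2 := H2 z Rz; apply: U; lra.
Qed.

Lemma exposed_lmap (a b c d : int) (R T : region) (X : qpt) : a * d - b * c != 0 ->
  (forall x, lin_img a b c d R x <-> T x) -> exposed R X -> exposed T (lmap a b c d X).
Proof.
move=> Hd HT [HX [phi [[p [q [k Hphi]]] H0 Hle Heq]]].
have Hq : (a%:~R * d%:~R - b%:~R * c%:~R : rat) != 0 by rewrite -!intrM -intrB intr_eq0.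
set D := (a%:~R * d%:~R - b%:~R * c%:~R : rat) in Hq.
pose inv (z : qpt) : qpt :=
  ((d%:~R * z.1 - b%:~R * z.2) / D, (- c%:~R * z.1 + a%:~R * z.2) / D).
have Hinv y : inv (lmap a b c d y) = y by case: y => y1 y2; rewrite /inv /lmap /D /=; congr pair; field.
have HTz z : T z -> exists2 y, R y & z = lmap a b c d y by move=> /HT [y [Ry ->]]; exists y.
split; first by apply/HT; exists X.
exists (fun z => phi (inv z)); split.
- exists ((p * d%:~R - q * c%:~R) / D), ((- p * b%:~R + q * a%:~R) / D), k => z.
  by rewrite Hphi /inv /D /=; field.
- by rewrite Hinv.
- by move=> z /HTz [y Ry ->]; rewrite Hinv; apply: Hle.
- by move=> z /HTz [y Ry ->]; rewrite Hinv => /(Heq _ Ry) ->.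
Qed.

Lemma triangle_vertex (v0 v1 v2 v : lpt) :
  v \in [:: v0; v1; v2] -> triangle v0 v1 v2 (emb v).
Proof. exact: conv_pts_mem. Qed.

(* The exposed points of a triangle are among its vertices: an affine function
   negative at the three vertices is negative on the whole triangle. *)
Lemma exposed_triangle (u0 u1 u2 : lpt) (Y : qpt) : exposed (triangle u0 u1 u2) Y ->
  [\/ Y = emb u0, Y = emb u1 | Y = emb u2].
Proof.
move=> [HY [phi [Ha H0 Hle Heq]]].
have T v : v \in [:: u0; u1; u2] -> phi (emb v) = 0 -> Y = emb v.
  by move=> Hv E; rewrite (Heq _ (triangle_vertex Hv) E).
have [E|N0] := eqVneq (phi (emb u0)) 0; first by constructor 1; apply: T; rewrite ?mem_head.
have [E|N1] := eqVneq (phi (emb u1)) 0; first by constructor 2; apply: T; rewrite ?inE ?eqxx ?orbT.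
have [E|N2] := eqVneq (phi (emb u2)) 0; first by constructor 3; apply: T; rewrite ?inE ?eqxx ?orbT.
pose m := Num.max (phi (emb u0)) (Num.max (phi (emb u1)) (phi (emb u2))).
have Hneg v : v \in [:: u0; u1; u2] -> phi (emb v) < 0.
  move=> Hv; rewrite lt_neqAle (Hle _ (triangle_vertex Hv)) andbT.
  by move: Hv; rewrite !inE => /or3P [] /eqP ->.
have Hm : m < 0 by rewrite !gt_max !Hneg ?inE ?eqxx ?orbT.
have : 0 <= m - phi Y.
  apply: (hull_ge0 (affine_sub (affine_cst m) Ha) HY) => _ /mapP [v Hv ->].
  by rewrite subr_ge0; move: Hv; rewrite !inE => /or3P [] /eqP ->; rewrite ?le_max ?lexx ?orbT.
by rewrite H0 subr0 leNgt Hm.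
Qed.

Lemma interior_linear_ge0 (P : region) (a b : rat) : origin_interior P ->
  (forall x, P x -> 0 <= a * x.1 + b * x.2) -> a = 0 /\ b = 0.
Proof.
move=> [e [He HP]] H.
have He' : 0 <= e := ltW He.
have Hn : `|0 : rat| <= e by rewrite normr0.
have Hp : `|e| <= e by rewrite ger0_norm.
have Hm : `|- e| <= e by rewrite normrN ger0_norm.
have h1 := H (e, 0) (HP (e, 0) Hp Hn).
have h2 := H (- e, 0) (HP (- e, 0) Hm Hn).
have h3 := H (0, e) (HP (0, e) Hn Hp).
have h4 := H (0, - e) (HP (0, - e) Hn Hm).
rewrite /= !mulr0 ?addr0 ?add0r in h1 h2 h3 h4.
split; nra.
Qed.

Lemma interior_affine_eq0 (P : region) (a b k : rat) : origin_interior P ->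
  (forall x, P x -> a * x.1 + b * x.2 + k = 0) -> [/\ a = 0, b = 0 & k = 0].
Proof.
move=> HO H.
have Hk : k = 0.
  have [e [He HP]] := HO; have He' : 0 <= e := ltW He.
  have H0 : `|0 : rat| <= e by rewrite normr0.
  by have := H (0, 0) (HP (0, 0) H0 H0); rewrite /= !mulr0 !add0r.
have [] // := interior_linear_ge0 HO (a := a) (b := b).
by move=> x /H; rewrite Hk addr0 => ->.
Qed.

Lemma fano_not_halfplane (v0 v1 v2 w : lpt) : fano_triangle v0 v1 v2 -> w <> (0, 0) ->
  ~ [/\ 0 <= wval w v0, 0 <= wval w v1 & 0 <= wval w v2].
Proof.
move=> [_ _ _ HO] Hw [h0 h1 h2].
have Hge x : triangle v0 v1 v2 x -> 0 <= w.1%:~R * x.1 + w.2%:~R * x.2.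
  move=> Hx; apply: (hull_ge0 (affine_pair w) Hx) => _ /mapP [v Hv ->].
  by rewrite pairing_emb ler0z; move: Hv; rewrite !inE => /or3P [] /eqP ->.
have [/eqP E1 /eqP E2] := interior_linear_ge0 HO Hge.
move: E1 E2; rewrite !intr_eq0 => /eqP E1 /eqP E2.
by apply: Hw; apply: injective_projections.
Qed.

Lemma fano_heights (v0 v1 v2 w : lpt) : fano_triangle v0 v1 v2 -> w <> (0, 0) ->
  ~ [/\ 0 <= wval w v0, 0 <= wval w v1 & 0 <= wval w v2] /\
  ~ [/\ wval w v0 <= 0, wval w v1 <= 0 & wval w v2 <= 0].
Proof.
move=> HF Hw; split; first exact: fano_not_halfplane.
have Hw' : (- w.1, - w.2) <> (0, 0).
  move=> [/eqP E1 /eqP E2]; apply: Hw; move: E1 E2; rewrite !oppr_eq0 => /eqP E1 /eqP E2.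
  exact: injective_projections.
have Hneg v : wval (- w.1, - w.2) v = - wval w v by rewrite /wval /=; ring.
by move=> [h0 h1 h2]; apply: (fano_not_halfplane HF Hw'); rewrite !Hneg !oppr_ge0.
Qed.

(* The vertices of a Fano triangle are distinct, since it is not contained in a line. *)
Lemma fano_vertices_neq (v0 v1 v2 : lpt) : fano_triangle v0 v1 v2 -> v1 <> v2.
Proof.
move=> [_ _ _ HO] E; subst v2.
(* an affine function vanishing at v0 and v1 vanishes on the degenerate
   triangle, hence everywhere *)
have vanish (a b k : rat) : a * (emb v0).1 + b * (emb v0).2 + k = 0 ->
    a * (emb v1).1 + b * (emb v1).2 + k = 0 -> [/\ a = 0, b = 0 & k = 0].
  move=> E0 E1; apply: (interior_affine_eq0 HO) => x Hx.
  apply: (hull_eq0 (phi := fun z => a * z.1 + b * z.2 + k) _ Hx); first by exists a, b, k.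
  by move=> _ /mapP [v Hv ->]; move: Hv; rewrite !inE => /or3P [] /eqP ->.
pose n1 : rat := (v1.2 - v0.2)%:~R; pose n2 : rat := (v0.1 - v1.1)%:~R.
pose k : rat := - (n1 * (v0.1)%:~R + n2 * (v0.2)%:~R).
have [/eqP e1 /eqP e2 _] : [/\ n1 = 0, n2 = 0 & k = 0].
  by apply: vanish; rewrite /emb /k /n1 /n2 /= ?intrB; ring.
have E : v0 = v1.
  move: e1 e2; rewrite !intr_eq0 !subr_eq0 => /eqP h2 /eqP h1.
  exact: injective_projections.
subst v1; have [/eqP] : [/\ 1 = 0 :> rat, 0 = 0 :> rat & - (v0.1)%:~R = 0 :> rat].
  by apply: vanish; rewrite /emb /=; ring.
by rewrite oner_eq0.
Qed.

Lemma triangle_swap01 (v0 v1 v2 : lpt) : triangle v1 v0 v2 = triangle v0 v1 v2.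
Proof.
apply: functional_extensionality => x; apply: propositional_extensionality.
split => /in_hull3 [c0 [c1 [c2 [h0 h1 h2 Hs ->]]]]; apply/in_hull3;
  exists c1, c0, c2; (split => //; [lra | congr pair; ring]).
Qed.

Lemma triangle_swap12 (v0 v1 v2 : lpt) : triangle v0 v2 v1 = triangle v0 v1 v2.
Proof.
apply: functional_extensionality => x; apply: propositional_extensionality.
split => /in_hull3 [c0 [c1 [c2 [h0 h1 h2 Hs ->]]]]; apply/in_hull3;
  exists c0, c2, c1; (split => //; [lra | congr pair; ring]).
Qed.

Lemma factor_swap01 (v0 v1 v2 w : lpt) (sF : seq lpt) (G : int -> seq lpt) :
  factor_with v0 v1 v2 w sF G -> factor_with v1 v0 v2 w sF G.
Proof.
move=> [H1 [H2 H3]]; split => //; split => // k.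
rewrite /hmin minCA triangle_swap01 => /H3 [A B C]; split => // v Hv; apply: B.
by move: Hv; rewrite !inE; case/or3P => ->; rewrite ?orbT.
Qed.

Lemma factor_swap12 (v0 v1 v2 w : lpt) (sF : seq lpt) (G : int -> seq lpt) :
  factor_with v0 v1 v2 w sF G -> factor_with v0 v2 v1 w sF G.
Proof.
move=> [H1 [H2 H3]]; split => //; split => // k.
rewrite /hmin (minC (wval w v2)) triangle_swap12 => /H3 [A B C]; split => // v Hv; apply: B.
by move: Hv; rewrite !inE; case/or3P => ->; rewrite ?orbT.
Qed.

Lemma mutation_swap01 (v0 v1 v2 w : lpt) (sF : seq lpt) (G : int -> seq lpt) :
  mutation v1 v0 v2 w sF G = mutation v0 v1 v2 w sF G.
Proof. by rewrite /mutation /hmin /hmax minCA maxCA triangle_swap01. Qed.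

Lemma mutation_swap12 (v0 v1 v2 w : lpt) (sF : seq lpt) (G : int -> seq lpt) :
  mutation v0 v2 v1 w sF G = mutation v0 v1 v2 w sF G.
Proof. by rewrite /mutation /hmin /hmax (minC (wval w v2)) (maxC (wval w v2)) triangle_swap12. Qed.

Lemma weights_swap01 (v0 v1 v2 : lpt) (l0 l1 l2 : nat) :
  weights v0 v1 v2 l0 l1 l2 -> weights v1 v0 v2 l1 l0 l2.
Proof.
move=> [[p0 p1 p2 Hg] [E1 E2]]; split; first by split => //; rewrite gcdnCA.
by split; [rewrite -[RHS]E1 | rewrite -[RHS]E2]; ring.
Qed.

Lemma weights_swap12 (v0 v1 v2 : lpt) (l0 l1 l2 : nat) :
  weights v0 v1 v2 l0 l1 l2 -> weights v0 v2 v1 l0 l2 l1.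
Proof.
move=> [[p0 p1 p2 Hg] [E1 E2]]; split; first by split => //; rewrite (gcdnC l2).
by split; [rewrite -[RHS]E1 | rewrite -[RHS]E2]; ring.
Qed.

Definition mutation_setting (v0 v1 v2 u0 u1 u2 : lpt) (l0 l1 l2 : nat) (w : lpt)
    (sF : seq lpt) (G : int -> seq lpt) : Prop :=
  [/\ fano_triangle v0 v1 v2, weights v0 v1 v2 l0 l1 l2, factor_with v0 v1 v2 w sF G &
      iso (mutation v0 v1 v2 w sF G) (triangle u0 u1 u2)].

Lemma setting_swap01 v0 v1 v2 u0 u1 u2 l0 l1 l2 w sF G :
  mutation_setting v0 v1 v2 u0 u1 u2 l0 l1 l2 w sF G ->
  mutation_setting v1 v0 v2 u0 u1 u2 l1 l0 l2 w sF G.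
Proof.
move=> [[p0 p1 p2 O] W F I]; split; last by rewrite mutation_swap01.
- by split; rewrite // triangle_swap01.
- exact: weights_swap01.
- exact: factor_swap01.
Qed.

Lemma setting_swap12 v0 v1 v2 u0 u1 u2 l0 l1 l2 w sF G :
  mutation_setting v0 v1 v2 u0 u1 u2 l0 l1 l2 w sF G ->
  mutation_setting v0 v2 v1 u0 u1 u2 l0 l2 l1 w sF G.
Proof.
move=> [[p0 p1 p2 O] W F I]; split; last by rewrite mutation_swap12.
- by split; rewrite // triangle_swap12.
- exact: weights_swap12.
- exact: factor_swap12.
Qed.

Lemma conv_single (A : region) (p x : qpt) : (forall y, A y -> y = p) -> conv A x -> x = p.
Proof.
move=> Hp Hx.
have E1 : 1 * x.1 + 0 * x.2 + - p.1 = 0.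
  by apply: (conv_eq0 (phi := fun z => 1 * z.1 + 0 * z.2 + - p.1) _ Hx) => [|y /Hp ->];
    [exists 1, 0, (- p.1) | ring].
have E2 : 0 * x.1 + 1 * x.2 + - p.2 = 0.
  by apply: (conv_eq0 (phi := fun z => 0 * z.1 + 1 * z.2 + - p.2) _ Hx) => [|y /Hp ->];
    [exists 0, 1, (- p.2) | ring].
by apply: injective_projections; lra.
Qed.

Lemma triangle_lowest_vertex (v0 v1 v2 w : lpt) (y : qpt) :
  wval w v0 < wval w v1 -> wval w v0 < wval w v2 ->
  triangle v0 v1 v2 y -> pairing w y = (wval w v0)%:~R -> y = emb v0.
Proof.
move=> L1 L2 /in_hull3 [c0 [c1 [c2 [h0 h1 h2 Hs Ey]]]] Hy.
have q1 : 0 < (wval w v1)%:~R - (wval w v0)%:~R :> rat by rewrite subr_gt0 ltr_int.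
have q2 : 0 < (wval w v2)%:~R - (wval w v0)%:~R :> rat by rewrite subr_gt0 ltr_int.
have E : c1 * ((wval w v1)%:~R - (wval w v0)%:~R) + c2 * ((wval w v2)%:~R - (wval w v0)%:~R) = 0.
  transitivity (pairing w y - (wval w v0)%:~R * (c0 + c1 + c2)).
    by rewrite Ey -!pairing_emb /pairing /=; ring.
  by rewrite Hy Hs; ring.
have z1 : c1 = 0 by nra.
have z2 : c2 = 0 by nra.
have z0 : c0 = 1 by lra.
by rewrite Ey z0 z1 z2 /emb /=; congr pair; ring.
Qed.

(* The minimum of w on a Fano triangle is not attained at a single vertex:
   the slice there is one point, too small to contain a dilate of a
   nontrivial factor. *)
Lemma no_unique_minimum (v0 v1 v2 w : lpt) (sF : seq lpt) (G : int -> seq lpt) :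
  fano_triangle v0 v1 v2 -> primitive w -> factor_with v0 v1 v2 w sF G -> nontrivial sF ->
  wval w v0 < wval w v1 -> wval w v0 < wval w v2 -> False.
Proof.
move=> Fv Hw [_ [_ HG]] [f1 [f2 [Hf1 Hf2 Hf12]]] L1 L2.
have Hneg : wval w v0 < 0.
  rewrite ltNge; apply/negP => Hc; apply: (fano_not_halfplane Fv (primitive_neq0 Hw)).
  by split => //; apply: ltW; apply: le_lt_trans Hc _.
have Hmin : hmin w v0 v1 v2 = wval w v0 by rewrite /hmin min_l // le_min !ltW.
have Hh : hmin w v0 v1 v2 <= hmin w v0 v1 v2 < 0 by rewrite lexx Hmin.
have [_ Hv0 Hsub] := HG _ Hh.
have [a [_ [Ha _]]] := Hv0 v0 (mem_head _ _) (esym Hmin).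
set c : rat := - (hmin w v0 v1 v2)%:~R.
have Ef f : f \in sF -> qadd a (qscale c (emb f)) = emb v0.
  move=> Hf; apply: (conv_single
    (A := fun x => triangle v0 v1 v2 x /\ is_lattice x /\ pairing w x = (hmin w v0 v1 v2)%:~R)).
    move=> y [Py [_ Hy]]; rewrite Hmin in Hy; exact: (triangle_lowest_vertex L1 L2 Py Hy).
  apply: Hsub; exists a, (qscale c (emb f)); split => //; split => //.
  by exists (emb f); split => //; apply: conv_pts_mem.
have Hc : c != 0 by rewrite oppr_eq0 intr_eq0 Hmin ltr0_neq0.
move: (Ef _ Hf1); rewrite -(Ef _ Hf2) => -[E1 E2].
move/eqP: Hf12; apply; apply: injective_projections; apply: intr_inj; apply: (mulfI Hc); lra.
Qed.

Definition shift (v f : lpt) (c : rat) : qpt := qadd (emb v) (qscale c (emb f)).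

Lemma pairing_shift (u v f : lpt) (c : rat) :
  pairing u (shift v f c) = (wval u v)%:~R + c * (wval u f)%:~R.
Proof. by rewrite /shift pairing_qadd pairing_qscale !pairing_emb. Qed.

Definition det2 (x y : qpt) : rat := x.1 * y.2 - x.2 * y.1.

(* The configuration where w is minimal on the edge [v1, v2] and maximal at v0:
   the mutation is then the quadrilateral with corners v1 - r fa, v2 - r fb,
   v0 + h fa, v0 + h fb, where -r < 0 < h are the values of w on the vertices
   and fa, fb are the endpoints of F in the direction of the edge. *)
Section PairMinimum.

Variables (v0 v1 v2 w fa fb : lpt) (sF : seq lpt) (G : int -> seq lpt).
Hypotheses (Fv : fano_triangle v0 v1 v2) (Hw : primitive w).
Hypotheses (HF : factor_with v0 v1 v2 w sF G) (Hnt : nontrivial sF).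
Hypotheses (E12 : wval w v1 = wval w v2) (L10 : wval w v1 < wval w v0).

Local Notation R := ((- wval w v1)%:~R : rat).
Local Notation H := ((wval w v0)%:~R : rat).
Local Notation Q := (mutation v0 v1 v2 w sF G).

Lemma bottom_lt0 : wval w v1 < 0.
Proof.
rewrite ltNge; apply/negP => Hc; apply: (fano_not_halfplane Fv (primitive_neq0 Hw)).
by rewrite -E12; split => //; apply: ltW; apply: le_lt_trans Hc L10.
Qed.

Lemma apex_gt0 : 0 < wval w v0.
Proof.
rewrite ltNge; apply/negP => Hc; have [_] := fano_heights Fv (primitive_neq0 Hw); apply.
by rewrite -E12; split => //; apply: ltW; apply: lt_le_trans L10 Hc.
Qed.

Lemma R_gt0 : 0 < R.
Proof. by rewrite ltr0z oppr_gt0 bottom_lt0. Qed.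

Lemma HR_gt0 : 0 < H + R.
Proof. by rewrite addr_gt0 ?R_gt0 // ltr0z apex_gt0. Qed.

Lemma hmin_bottom : hmin w v0 v1 v2 = wval w v1.
Proof. by rewrite /hmin -E12 minxx min_r // ltW. Qed.

Lemma hmax_apex : hmax w v0 v1 v2 = wval w v0.
Proof. by rewrite /hmax -E12 maxxx max_l // ltW. Qed.

Lemma height_v0 : pairing w (emb v0) = H.
Proof. by rewrite pairing_emb. Qed.

Lemma height_v1 : pairing w (emb v1) = - R.
Proof. by rewrite pairing_emb intrN opprK. Qed.

Lemma height_v2 : pairing w (emb v2) = - R.
Proof. by rewrite pairing_emb -E12 intrN opprK. Qed.

(* The direction of the bottom edge, orthogonal to w; together with w it gives
   coordinates on N_Q. *)
Definition edge : lpt := (v2.1 - v1.1, v2.2 - v1.2).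

Lemma edge_orth : wval w edge = 0.
Proof.
transitivity (wval w v2 - wval w v1); first by rewrite /wval /edge /=; ring.
by rewrite E12 subrr.
Qed.

Lemma edge_neq0 : edge <> (0, 0).
Proof.
move=> [/eqP E1 /eqP E2]; apply: (fano_vertices_neq Fv).
by move: E1 E2; rewrite !subr_eq0 => /eqP E1 /eqP E2; apply: injective_projections.
Qed.

Lemma coords_inj (x y : qpt) :
  pairing w x = pairing w y -> pairing edge x = pairing edge y -> x = y.
Proof. exact: pairings_inj (primitive_neq0 Hw) edge_neq0 edge_orth. Qed.

Local Notation p0 := (pairing edge (emb v0)).
Local Notation p1 := (pairing edge (emb v1)).
Local Notation p2 := (pairing edge (emb v2)).

Lemma p1_lt_p2 : p1 < p2.
Proof.
rewrite -subr_gt0 !pairing_emb -intrB ltr0z.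
have -> : wval edge v2 - wval edge v1 = edge.1 * edge.1 + edge.2 * edge.2.
  by rewrite /wval /edge /=; ring.
exact: sqsum_gt0 edge_neq0.
Qed.

Hypotheses (Hfa : fa \in sF) (Hfb : fb \in sF).
Hypothesis fa_min : forall f, f \in sF -> pairing edge (emb fa) <= pairing edge (emb f).
Hypothesis fb_max : forall f, f \in sF -> pairing edge (emb f) <= pairing edge (emb fb).

Local Notation al := (pairing edge (emb fa)).
Local Notation be := (pairing edge (emb fb)).

Lemma factor_level (f : lpt) : f \in sF -> pairing w (emb f) = 0.
Proof. by case: HF => _ [Hf0 _] /Hf0; rewrite pairing_emb => ->. Qed.

Lemma al_lt_be : al < be.
Proof.
have [f1 [f2 [Hf1 Hf2 /eqP Hf12]]] := Hnt.
rewrite ltNge; apply/negP => Hc; apply: Hf12; apply: emb_inj; apply: coords_inj.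
  by rewrite !factor_level.
have := fa_min Hf1; have := fa_min Hf2; have := fb_max Hf1; have := fb_max Hf2; lra.
Qed.

Lemma factor_bounds (b : qpt) : conv_pts sF b ->
  [/\ pairing w b = 0, al <= pairing edge b & pairing edge b <= be].
Proof.
move=> Hb; split.
- by apply: (conv_pts_eq0 (affine_pair w) Hb) => f /factor_level.
- rewrite -subr_ge0; apply: (conv_pts_ge0 (affine_sub (affine_pair edge) (affine_cst _)) Hb).
  by move=> f Hf; rewrite subr_ge0 fa_min.
- rewrite -subr_ge0; apply: (conv_pts_ge0 (affine_sub (affine_cst _) (affine_pair edge)) Hb).
  by move=> f Hf; rewrite subr_ge0 fb_max.
Qed.

(* Affine functions cutting out the left edge [v1, v0] and the right edge
   [v2, v0] of the triangle. *)
Definition left_fun (x : qpt) : rat :=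
  (pairing edge x - p1) * (H + R) - (p0 - p1) * (pairing w x + R).
Definition right_fun (x : qpt) : rat :=
  (p2 - pairing edge x) * (H + R) + (p0 - p2) * (pairing w x + R).

Lemma left_fun_affine : affine left_fun.
Proof.
apply: (affine_ext _ (affine_pairings w edge (- (p0 - p1)) (H + R) (- p1 * (H + R) - (p0 - p1) * R))).
by move=> x; rewrite /left_fun; ring.
Qed.

Lemma right_fun_affine : affine right_fun.
Proof.
apply: (affine_ext _ (affine_pairings w edge (p0 - p2) (- (H + R)) (p2 * (H + R) + (p0 - p2) * R))).
by move=> x; rewrite /right_fun; ring.
Qed.

Lemma left_fun_shift (x z : qpt) (c : rat) : pairing w z = 0 ->
  left_fun (qadd x (qscale c z)) = left_fun x + c * (H + R) * pairing edge z.
Proof. by move=> Hz; rewrite /left_fun !pairing_qadd !pairing_qscale Hz; ring. Qed.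

Lemma right_fun_shift (x z : qpt) (c : rat) : pairing w z = 0 ->
  right_fun (qadd x (qscale c z)) = right_fun x - c * (H + R) * pairing edge z.
Proof. by move=> Hz; rewrite /right_fun !pairing_qadd !pairing_qscale Hz; ring. Qed.

Lemma left_fun_v1 : left_fun (emb v1) = 0.
Proof. by rewrite /left_fun height_v1; ring. Qed.

Lemma right_fun_v2 : right_fun (emb v2) = 0.
Proof. by rewrite /right_fun height_v2; ring. Qed.

Lemma triangle_edge_bounds (y : qpt) : triangle v0 v1 v2 y ->
  0 <= left_fun y /\ 0 <= right_fun y.
Proof.
have HHR := HR_gt0; have H12 := p1_lt_p2.
move=> Hy; split; [apply: (hull_ge0 left_fun_affine Hy) | apply: (hull_ge0 right_fun_affine Hy)];
  move=> _ /mapP [v + ->]; rewrite !inE => /or3P [] /eqP ->;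
  rewrite /left_fun /right_fun ?height_v0 ?height_v1 ?height_v2; nra.
Qed.

Lemma slice_edge_bounds (k : int) (y : qpt) : slice (triangle v0 v1 v2) w k y ->
  0 <= left_fun y /\ 0 <= right_fun y.
Proof.
move=> Hy; split; [apply: (conv_ge0 left_fun_affine Hy) | apply: (conv_ge0 right_fun_affine Hy)];
  by move=> z [/triangle_edge_bounds [] ].
Qed.

Definition mleft (x : qpt) : rat := left_fun x - al * (H + R) * pairing w x.
Definition mright (x : qpt) : rat := right_fun x + be * (H + R) * pairing w x.
Definition mbottom (x : qpt) : rat := pairing w x + R.
Definition mtop (x : qpt) : rat := H - pairing w x.

Lemma mutation_bounds_affine :
  [/\ affine mleft, affine mright, affine mbottom & affine mtop].
Proof.
split; first exact: affine_sub left_fun_affine (affine_scale _ (affine_pair w)).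
- exact: affine_add right_fun_affine (affine_scale _ (affine_pair w)).
- exact: affine_add (affine_pair w) (affine_cst _).
- exact: affine_sub (affine_cst _) (affine_pair w).
Qed.

Lemma generator_bounds (y : qpt) :
  (exists k : int, hmin w v0 v1 v2 <= k < 0 /\ conv_pts (G k) y) \/
  (exists k : int, 0 <= k <= hmax w v0 v1 v2 /\
     msum (slice (triangle v0 v1 v2) w k) (dil k%:~R (conv_pts sF)) y) ->
  [/\ 0 <= mleft y, 0 <= mright y, 0 <= mbottom y & 0 <= mtop y].
Proof.
have HHR := HR_gt0; have HR := R_gt0; have [_ [_ HG]] := HF.
case=> [[k [Hk Hy]] | [k [Hk [a [_ [Ha [[b [Hb ->]] ->]]]]]]].
- have [Gk _ Hsub] := HG k Hk.
  have sy : pairing w y = k%:~R := conv_pts_level Hy Gk.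
  have in_slice f : f \in sF -> slice (triangle v0 v1 v2) w k (qadd y (qscale (- k%:~R) (emb f))).
    move=> Hf; apply: Hsub; exists y, (qscale (- k%:~R) (emb f)); split => //; split => //.
    by exists (emb f); split => //; apply: conv_pts_mem.
  have [+ _] := slice_edge_bounds (in_slice _ Hfa).
  have [_ +] := slice_edge_bounds (in_slice _ Hfb).
  rewrite left_fun_shift ?right_fun_shift ?factor_level // => Hr Hl.
  move: Hk; rewrite hmin_bottom => /andP [Hk1 Hk2].
  have Hk1' : - R <= k%:~R by rewrite intrN opprK ler_int.
  have Hk2' : k%:~R < H by rewrite ltr_int (lt_trans Hk2 apex_gt0).
  have -> : mleft y = left_fun y + (- k%:~R) * (H + R) * al by rewrite /mleft sy; ring.
  have -> : mright y = right_fun y - (- k%:~R) * (H + R) * be by rewrite /mright sy; ring.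
  by rewrite /mbottom /mtop sy; split => //; lra.
- have [sb Hb1 Hb2] := factor_bounds Hb.
  have [Hl Hr] := slice_edge_bounds Ha.
  have sa : pairing w a = k%:~R := slice_level Ha.
  move: Hk; rewrite hmax_apex => /andP [Hk1 Hk2].
  have Hk0 : 0 <= k%:~R :> rat by rewrite ler0z.
  have HkH : k%:~R <= H by rewrite ler_int.
  have sy : pairing w (qadd a (qscale k%:~R b)) = k%:~R.
    by rewrite pairing_qadd pairing_qscale sa sb mulr0 addr0.
  have X1 : 0 <= k%:~R * (H + R) * (pairing edge b - al).
    by rewrite !mulr_ge0 ?subr_ge0 // ltW.
  have X2 : 0 <= k%:~R * (H + R) * (be - pairing edge b).
    by rewrite !mulr_ge0 ?subr_ge0 // ltW.
  have -> : mleft (qadd a (qscale k%:~R b)) = left_fun a + k%:~R * (H + R) * (pairing edge b - al).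
    by rewrite /mleft sy left_fun_shift //; ring.
  have -> : mright (qadd a (qscale k%:~R b)) = right_fun a + k%:~R * (H + R) * (be - pairing edge b).
    by rewrite /mright sy right_fun_shift //; ring.
  by rewrite /mbottom /mtop sy; split; [exact: addr_ge0 | exact: addr_ge0 | lra | lra].
Qed.

Lemma mutation_bounds (x : qpt) : Q x ->
  [/\ 0 <= mleft x, 0 <= mright x, 0 <= mbottom x & 0 <= mtop x].
Proof.
have [A1 A2 A3 A4] := mutation_bounds_affine.
move=> Hx; split; [apply: (conv_ge0 A1 Hx) | apply: (conv_ge0 A2 Hx)
  | apply: (conv_ge0 A3 Hx) | apply: (conv_ge0 A4 Hx)]; by move=> y /generator_bounds [].
Qed.

Lemma mleft_inj (z X : qpt) : pairing w z = pairing w X -> mleft z = mleft X -> z = X.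
Proof.
move=> Ew El; apply: coords_inj => //; apply: (mulIf (lt0r_neq0 HR_gt0)).
have E : (pairing edge z - pairing edge X) * (H + R) = mleft z - mleft X.
  by rewrite /mleft /left_fun Ew; ring.
by apply/eqP; rewrite -subr_eq0 -mulrBl E El subrr.
Qed.

Lemma mright_inj (z X : qpt) : pairing w z = pairing w X -> mright z = mright X -> z = X.
Proof.
move=> Ew Er; apply: coords_inj => //; apply: (mulIf (lt0r_neq0 HR_gt0)).
have E : (pairing edge X - pairing edge z) * (H + R) = mright z - mright X.
  by rewrite /mright /right_fun Ew; ring.
by apply/eqP; rewrite eq_sym -subr_eq0 -mulrBl E Er subrr.
Qed.

Local Notation LL := (shift v1 fa (- R)).
Local Notation LR := (shift v2 fb (- R)).
Local Notation UL := (shift v0 fa H).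
Local Notation UR := (shift v0 fb H).

Lemma lower_heights : pairing w LL = - R /\ pairing w LR = - R.
Proof. by rewrite !pairing_shift -!pairing_emb height_v1 height_v2 !factor_level // !mulr0 !addr0. Qed.

Lemma upper_heights : pairing w UL = H /\ pairing w UR = H.
Proof. by rewrite !pairing_shift -!pairing_emb height_v0 !factor_level // !mulr0 !addr0. Qed.

Lemma corner_values :
  [/\ mleft LL = 0, mright LR = 0, mleft UL = 0 & mright UR = 0].
Proof.
have [hLL hLR] := lower_heights; have [hUL hUR] := upper_heights.
rewrite /mleft /mright hLL hLR hUL hUR /left_fun /right_fun hLL hLR hUL hUR.
by rewrite !pairing_shift -!pairing_emb; split; ring.
Qed.

Lemma upper_corners_mem : Q UL /\ Q UR.
Proof.
have Sv0 : slice (triangle v0 v1 v2) w (wval w v0) (emb v0).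
  apply: conv_in; split; first by apply: triangle_vertex; rewrite mem_head.
  by split; [exists v0 | rewrite height_v0].
have Hh : 0 <= wval w v0 <= hmax w v0 v1 v2 by rewrite hmax_apex lexx andbT ltW ?apex_gt0.
have mem f : f \in sF -> Q (shift v0 f H).
  move=> Hf; apply: conv_in; right; exists (wval w v0); split => //.
  exists (emb v0), (qscale H (emb f)); split => //; split => //.
  by exists (emb f); split => //; apply: conv_pts_mem.
by split; apply: mem.
Qed.

(* The lower corners are the points of the lowest G_h forced by the vertices
   v1 and v2: such a point lies in the mutation and on the line mleft = 0
   (resp. mright = 0). *)
Lemma lower_corners_mem : Q LL /\ Q LR.
Proof.
have [_ [_ HG]] := HF; have HHR := HR_gt0; have HR := R_gt0.
have Hk : hmin w v0 v1 v2 <= hmin w v0 v1 v2 < 0 by rewrite lexx hmin_bottom bottom_lt0.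
have [Gk Hv _] := HG _ Hk.
have decomp v : v \in [:: v0; v1; v2] -> wval w v = wval w v1 -> exists a b,
    [/\ Q a, pairing w a = - R, conv_pts sF b & emb v = qadd a (qscale R b)].
  move=> Hv3 Ev; rewrite -hmin_bottom in Ev.
  have [a [_ [Ha [[b [Hb ->]] ->]]]] := Hv v Hv3 Ev.
  exists a, b; split => //.
  - by apply: conv_in; left; exists (hmin w v0 v1 v2).
  - by rewrite (conv_pts_level Ha Gk) hmin_bottom intrN opprK.
  - by rewrite hmin_bottom intrN.
have [hLL hLR] := lower_heights; have [eLL eLR _ _] := corner_values.
split.
- have Hv1 : v1 \in [:: v0; v1; v2] by rewrite !inE eqxx orbT.
  have [a [b [Qa sa Hb Ev]]] := decomp v1 Hv1 erefl.
  have [Hl _ _ _] := mutation_bounds Qa; have [sb Hb1 _] := factor_bounds Hb.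
  have El : mleft a = R * (H + R) * (al - pairing edge b).
    have := left_fun_v1; rewrite Ev left_fun_shift // => E.
    transitivity (left_fun a + R * (H + R) * pairing edge b + R * (H + R) * (al - pairing edge b)).
      by rewrite /mleft sa; ring.
    by rewrite E add0r.
  suff -> : LL = a by [].
  apply: mleft_inj; first by rewrite hLL sa.
  apply/eqP; rewrite eLL eq_le Hl El /=; apply: mulr_ge0_le0; last by rewrite subr_le0.
  by rewrite mulr_ge0 // ltW.
- have Hv2 : v2 \in [:: v0; v1; v2] by rewrite !inE eqxx !orbT.
  have [a [b [Qa sa Hb Ev]]] := decomp v2 Hv2 (esym E12).
  have [_ Hr _ _] := mutation_bounds Qa; have [sb _ Hb2] := factor_bounds Hb.
  have Er : mright a = R * (H + R) * (pairing edge b - be).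
    have := right_fun_v2; rewrite Ev right_fun_shift // => E.
    transitivity (right_fun a - R * (H + R) * pairing edge b + R * (H + R) * (pairing edge b - be)).
      by rewrite /mright sa; ring.
    by rewrite E add0r.
  suff -> : LR = a by [].
  apply: mright_inj; first by rewrite hLR sa.
  apply/eqP; rewrite eLR eq_le Hr Er /=; apply: mulr_ge0_le0; last by rewrite subr_le0.
  by rewrite mulr_ge0 // ltW.
Qed.

(* Each corner is cut out by two of the four bounding functions. *)
Lemma corners_exposed : [/\ exposed Q LL, exposed Q LR, exposed Q UL & exposed Q UR].
Proof.
have [A1 A2 A3 A4] := mutation_bounds_affine.
have [B1 B2 B3 B4] : [/\ forall z, Q z -> 0 <= mleft z, forall z, Q z -> 0 <= mright z,
    forall z, Q z -> 0 <= mbottom z & forall z, Q z -> 0 <= mtop z].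
  by split => z /mutation_bounds [].
have [hLL hLR] := lower_heights; have [hUL hUR] := upper_heights.
have [eLL eLR eUL eUR] := corner_values.
have [QLL QLR] := lower_corners_mem; have [QUL QUR] := upper_corners_mem.
have bot z : mbottom z = 0 -> pairing w z = - R by rewrite /mbottom => /eqP; rewrite addr_eq0 => /eqP.
have top z : mtop z = 0 -> pairing w z = H by rewrite /mtop => /eqP; rewrite subr_eq0 eq_sym => /eqP.
split.
- apply: (exposed_of A3 A1 B3 B1 QLL); rewrite /mbottom ?hLL ?addNr //.
  by move=> z /bot hz El; apply: mleft_inj; rewrite ?hz ?hLL ?El.
- apply: (exposed_of A3 A2 B3 B2 QLR); rewrite /mbottom ?hLR ?addNr //.
  by move=> z /bot hz Er; apply: mright_inj; rewrite ?hz ?hLR ?Er.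
- apply: (exposed_of A4 A1 B4 B1 QUL); rewrite /mtop ?hUL ?subrr //.
  by move=> z /top hz El; apply: mleft_inj; rewrite ?hz ?hUL ?El.
- apply: (exposed_of A4 A2 B4 B2 QUR); rewrite /mtop ?hUR ?subrr //.
  by move=> z /top hz Er; apply: mright_inj; rewrite ?hz ?hUR ?Er.
Qed.

Lemma corners_distinct : [/\ LL <> UL, LL <> UR, LR <> UL, LR <> UR & UL <> UR].
Proof.
have HHR := HR_gt0; have Hab := al_lt_be; have HH : 0 < H by rewrite ltr0z apex_gt0.
have [hLL hLR] := lower_heights; have [hUL hUR] := upper_heights.
have lower_upper X Y : pairing w X = - R -> pairing w Y = H -> X <> Y.
  by move=> hX hY E; move: hY; rewrite -E hX; lra.
split; try exact: lower_upper.
move/(congr1 (pairing edge)); rewrite !pairing_shift => /addrI /(mulfI (lt0r_neq0 HH)) E.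
by move: Hab; rewrite !pairing_emb E ltxx.
Qed.

Lemma upper_corners_det : det2 UL UR != 0.
Proof.
have Hab := al_lt_be; have HH : 0 < H by rewrite ltr0z apex_gt0.
have [hUL hUR] := upper_heights.
apply/eqP => E0.
have : det2 UL UR * (w.1%:~R * edge.2%:~R - w.2%:~R * edge.1%:~R)
       = pairing w UL * pairing edge UR - pairing w UR * pairing edge UL.
  by rewrite /det2 /pairing; ring.
rewrite E0 mul0r hUL hUR !pairing_shift -!pairing_emb => E.
have Hpos : 0 < H * H * (be - al) by rewrite !mulr_gt0 // subr_gt0.
suff E' : H * H * (be - al) = 0 by rewrite E' ltxx in Hpos.
by rewrite [RHS]E !pairing_emb; ring.
Qed.

End PairMinimum.

Lemma weights_rat (v0 v1 v2 : lpt) (l0 l1 l2 : nat) : weights v0 v1 v2 l0 l1 l2 ->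
  l0%:R * (emb v0).1 + l1%:R * (emb v1).1 + l2%:R * (emb v2).1 = 0 :> rat /\
  l0%:R * (emb v0).2 + l1%:R * (emb v1).2 + l2%:R * (emb v2).2 = 0 :> rat.
Proof.
move=> [_ [E1 E2]]; split.
  by have := congr1 (fun z : int => z%:~R : rat) E1; rewrite /= !intrD !intrM.
by have := congr1 (fun z : int => z%:~R : rat) E2; rewrite /= !intrD !intrM.
Qed.

Lemma weights_heights (v0 v1 v2 w : lpt) (l0 l1 l2 : nat) : weights v0 v1 v2 l0 l1 l2 ->
  l0%:Z * wval w v0 + l1%:Z * wval w v1 + l2%:Z * wval w v2 = 0.
Proof.
move=> [_ [E1 E2]].
transitivity (w.1 * (l0%:Z * v0.1 + l1%:Z * v1.1 + l2%:Z * v2.1)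
            + w.2 * (l0%:Z * v0.2 + l1%:Z * v1.2 + l2%:Z * v2.2)); first by rewrite /wval; ring.
by rewrite E1 E2; ring.
Qed.

(* A common divisor of l1 and l2 divides l0 v0, hence v0, hence is 1. *)
Lemma weights_coprime (v0 v1 v2 : lpt) (l0 l1 l2 : nat) :
  weights v0 v1 v2 l0 l1 l2 -> primitive v0 -> coprime l1 l2.
Proof.
move=> [[_ _ _ Hg] [E1 E2]] Hp; set d := gcdn l1 l2.
have cd : coprimez d%:Z l0%:Z by rewrite coprimezE /= coprime_sym /coprime Hg.
have [q1 Hq1] : exists q, l1%:Z = q * d%:Z by apply/dvdzP; rewrite dvdzE /= dvdn_gcdl.
have [q2 Hq2] : exists q, l2%:Z = q * d%:Z by apply/dvdzP; rewrite dvdzE /= dvdn_gcdr.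
have key (a b c : int) : l0%:Z * a + l1%:Z * b + l2%:Z * c = 0 -> (d%:Z %| a)%Z.
  move=> E; rewrite -(Gauss_dvdzl _ cd); apply/dvdzP; exists (- (q1 * b + q2 * c)).
  have -> : a * l0%:Z = - (l1%:Z * b + l2%:Z * c).
    by apply/eqP; rewrite -subr_eq0 -E; apply/eqP; ring.
  by rewrite Hq1 Hq2; ring.
have : (d%:Z %| gcdz v0.1 v0.2)%Z by rewrite dvdz_gcd (key _ _ _ E1) (key _ _ _ E2).
by rewrite Hp dvdz1 /= => /eqP Hd; rewrite /coprime -/d Hd.
Qed.

Lemma proportional_weights (l0 l1 l2 x y z : nat) :
  (0 < l0)%N -> (0 < l1)%N -> (0 < x)%N -> coprime l1 l2 -> coprime y z ->
  (x * (l0 * l1) = (l1 + l2) ^ 2 * y)%N -> (x * (l0 * l2) = (l1 + l2) ^ 2 * z)%N ->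
  [/\ y = l1, z = l2, (l0 %| (l1 + l2) ^ 2)%N & ((l1 + l2) ^ 2 %/ l0)%N = x].
Proof.
move=> p0 p1 px c12 cyz Ey Ez.
have Hyz : (l1 * z = l2 * y)%N.
  have : (x * l0 * (l1 * z) = x * l0 * (l2 * y))%N.
    rewrite !mulnA -(mulnA x l0 l1) Ey -(mulnA x l0 l2) Ez.
    by rewrite mulnC mulnA (mulnC z) mulnC !mulnA.
  by move/eqP; rewrite eqn_mul2l muln_eq0 (gtn_eqF px) (gtn_eqF p0) /= => /eqP.
have d1 : (y %| l1)%N by rewrite -(Gauss_dvdl _ cyz) Hyz dvdn_mull.
have d2 : (l1 %| y)%N by rewrite -(Gauss_dvdl _ c12) mulnC -Hyz dvdn_mulr.
have Ey1 : y = l1 by apply/eqP; rewrite eqn_dvd d1 d2.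
subst y; have Ez2 : z = l2 by apply/eqP; rewrite -(eqn_pmul2l p1) Hyz mulnC.
have Ex : (x * l0 = (l1 + l2) ^ 2)%N by apply/eqP; rewrite -(eqn_pmul2r p1) -mulnA Ey.
by split => //; rewrite -Ex ?dvdn_mull // mulnK.
Qed.

Lemma relation_unique (A C D : qpt) (x y z x' y' z' : rat) : det2 C D != 0 ->
  x * A.1 + y * C.1 + z * D.1 = 0 -> x * A.2 + y * C.2 + z * D.2 = 0 ->
  x' * A.1 + y' * C.1 + z' * D.1 = 0 -> x' * A.2 + y' * C.2 + z' * D.2 = 0 ->
  x' * y = x * y' /\ x' * z = x * z'.
Proof.
move=> Hd E1 E2 F1 F2.
have G1 : (x' * y - x * y') * det2 C D = 0.
  transitivity ((x' * (x * A.1 + y * C.1 + z * D.1) - x * (x' * A.1 + y' * C.1 + z' * D.1)) * D.2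
    - (x' * (x * A.2 + y * C.2 + z * D.2) - x * (x' * A.2 + y' * C.2 + z' * D.2)) * D.1).
    by rewrite /det2; ring.
  by rewrite E1 E2 F1 F2; ring.
have G2 : (x' * z - x * z') * det2 C D = 0.
  transitivity (C.1 * (x' * (x * A.2 + y * C.2 + z * D.2) - x * (x' * A.2 + y' * C.2 + z' * D.2))
    - C.2 * (x' * (x * A.1 + y * C.1 + z * D.1) - x * (x' * A.1 + y' * C.1 + z' * D.1))).
    by rewrite /det2; ring.
  by rewrite E1 E2 F1 F2; ring.
move/eqP: G1; rewrite mulf_eq0 (negbTE Hd) orbF subr_eq0 => /eqP ->.
by move/eqP: G2; rewrite mulf_eq0 (negbTE Hd) orbF subr_eq0 => /eqP ->.
Qed.

Lemma mutation_relation (v0 v1 v2 fa fb : lpt) (l0 l1 l2 : nat) (r h : rat) :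
  weights v0 v1 v2 l0 l1 l2 -> l0%:R * h = (l1 + l2)%:R * r ->
  shift v1 fa (- r) = shift v2 fb (- r) ->
  let X := shift v1 fa (- r) in let Y := shift v0 fa h in let Z := shift v0 fb h in
  ((l1 + l2) ^ 2)%:R * X.1 + (l0 * l1)%:R * Y.1 + (l0 * l2)%:R * Z.1 = 0 /\
  ((l1 + l2) ^ 2)%:R * X.2 + (l0 * l1)%:R * Y.2 + (l0 * l2)%:R * Z.2 = 0.
Proof.
move=> Wv Hh E X Y Z; have [R1 R2] := weights_rat Wv; rewrite /emb /= in R1 R2.
have [E1 E2] : X.1 = (shift v2 fb (- r)).1 /\ X.2 = (shift v2 fb (- r)).2 by rewrite /X E.
rewrite /X /Y /Z /shift /qadd /qscale /emb /= in E1 E2 *.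
split.
  transitivity ((l1 + l2)%:R * (l0%:R * v0.1%:~R + l1%:R * v1.1%:~R + l2%:R * v2.1%:~R)
     + l2%:R * (l1 + l2)%:R * (v1.1%:~R + - r * fa.1%:~R - (v2.1%:~R + - r * fb.1%:~R))
     + (l1%:R * fa.1%:~R + l2%:R * fb.1%:~R) * (l0%:R * h - (l1 + l2)%:R * r) : rat).
    by rewrite natrX !natrD !natrM; ring.
  by rewrite R1 E1 Hh !subrr; ring.
transitivity ((l1 + l2)%:R * (l0%:R * v0.2%:~R + l1%:R * v1.2%:~R + l2%:R * v2.2%:~R)
   + l2%:R * (l1 + l2)%:R * (v1.2%:~R + - r * fa.2%:~R - (v2.2%:~R + - r * fb.2%:~R))
   + (l1%:R * fa.2%:~R + l2%:R * fb.2%:~R) * (l0%:R * h - (l1 + l2)%:R * r) : rat).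
  by rewrite natrX !natrD !natrM; ring.
by rewrite R2 E2 Hh !subrr; ring.
Qed.

Lemma pigeonhole4 (T : Type) (a b c d e0 e1 e2 : T) :
  a <> b -> a <> c -> a <> d -> b <> c -> b <> d -> c <> d ->
  [\/ a = e0, a = e1 | a = e2] -> [\/ b = e0, b = e1 | b = e2] ->
  [\/ c = e0, c = e1 | c = e2] -> [\/ d = e0, d = e1 | d = e2] -> False.
Proof.
move=> ? ? ? ? ? ?.
by case=> ?; case=> ?; case=> ?; case=> ?; subst; congruence.
Qed.

Lemma image_vertices_relation (u0 u1 u2 : lpt) (m0 m1 m2 : nat) (a b c d : int)
    (X Y Z : qpt) :
  fano_triangle u0 u1 u2 -> weights u0 u1 u2 m0 m1 m2 -> a * d - b * c != 0 ->
  let L := lmap a b c d in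
  L X <> L Y -> L X <> L Z -> L Y <> L Z ->
  [\/ L X = emb u0, L X = emb u1 | L X = emb u2] ->
  [\/ L Y = emb u0, L Y = emb u1 | L Y = emb u2] ->
  [\/ L Z = emb u0, L Z = emb u1 | L Z = emb u2] ->
  exists x y z : nat, [/\ perm_eq [:: m0; m1; m2] [:: x; y; z], (0 < x)%N, coprime y z &
    x%:R * X.1 + y%:R * Y.1 + z%:R * Z.1 = 0 /\ x%:R * X.2 + y%:R * Y.2 + z%:R * Z.2 = 0].
Proof.
move=> [pu0 pu1 pu2 _] Wu Hdn L nXY nXZ nYZ HX HY HZ.
have key p q s (x y z : nat) : weights p q s x y z -> perm_eq [:: m0; m1; m2] [:: x; y; z] ->
    primitive p -> L X = emb p -> L Y = emb q -> L Z = emb s ->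
    exists x y z : nat, [/\ perm_eq [:: m0; m1; m2] [:: x; y; z], (0 < x)%N, coprime y z &
      x%:R * X.1 + y%:R * Y.1 + z%:R * Z.1 = 0 /\ x%:R * X.2 + y%:R * Y.2 + z%:R * Z.2 = 0].
  move=> Wpqs Hperm Hp EX EY EZ; exists x, y, z; split => //.
  - by case: Wpqs => [[]].
  - exact: weights_coprime Wpqs Hp.
  have [R1 R2] := weights_rat Wpqs; rewrite -EX -EY -EZ /L /lmap /= in R1 R2.
  have : lmap a b c d (x%:R * X.1 + y%:R * Y.1 + z%:R * Z.1, x%:R * X.2 + y%:R * Y.2 + z%:R * Z.2)
         = lmap a b c d (0, 0).
    by rewrite /lmap /= !mulr0 addr0; congr pair; [rewrite -[RHS]R1 | rewrite -[RHS]R2]; ring.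
  by move/(lmap_inj Hdn) => [-> ->].
have W102 := weights_swap01 Wu; have W021 := weights_swap12 Wu.
have W120 := weights_swap12 W102; have W201 := weights_swap01 W021.
have W210 := weights_swap12 W201.
case: HX => EX; case: HY => EY; case: HZ => EZ; try by exfalso; congruence.
all: first [ apply: (key _ _ _ _ _ _ Wu _ _ EX EY EZ) | apply: (key _ _ _ _ _ _ W102 _ _ EX EY EZ)
           | apply: (key _ _ _ _ _ _ W021 _ _ EX EY EZ) | apply: (key _ _ _ _ _ _ W120 _ _ EX EY EZ)
           | apply: (key _ _ _ _ _ _ W201 _ _ EX EY EZ) | apply: (key _ _ _ _ _ _ W210 _ _ EX EY EZ) ].
all: by [| apply/permP => ? /=; lia].
Qed.

(* Proposition 3.2 in the configuration where w is minimal on the edge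
   [v1, v2]: the mutation has corners v1 - r fa = v2 - r fb, v0 + h fa and
   v0 + h fb, which must be the images of the vertices of the target triangle. *)
Lemma pair_minimum_weights (v0 v1 v2 u0 u1 u2 w : lpt) (l0 l1 l2 m0 m1 m2 : nat)
    (sF : seq lpt) (G : int -> seq lpt) :
  mutation_setting v0 v1 v2 u0 u1 u2 l0 l1 l2 w sF G -> fano_triangle u0 u1 u2 ->
  weights u0 u1 u2 m0 m1 m2 -> primitive w -> nontrivial sF ->
  wval w v1 = wval w v2 -> wval w v1 < wval w v0 ->
  (l0 %| (l1 + l2) ^ 2)%N /\ perm_eq [:: m0; m1; m2] [:: l1; l2; ((l1 + l2) ^ 2 %/ l0)%N].
Proof.
move=> [Fv Wv HF [a [b [c [d [Hdet HT]]]]]] Fu Wu Hw Hnt E12 L10.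
have Hdn : a * d - b * c != 0 by case: Hdet => ->.
have HsF : sF != [::] by case: HF.
have [fa Hfa fa_min] := seq_argmin (fun f => pairing (edge v1 v2) (emb f)) HsF.
have [fb Hfb fb_max] := seq_argmax (fun f => pairing (edge v1 v2) (emb f)) HsF.
have [xLL xLR xUL xUR] := corners_exposed Fv Hw HF E12 L10 Hfa Hfb fa_min fb_max.
have [nAC nAD nBC nBD nCD] := corners_distinct Fv Hw HF Hnt E12 L10 Hfa Hfb fa_min fb_max.
have Hdet2 := upper_corners_det Fv Hw HF Hnt E12 L10 Hfa Hfb fa_min fb_max.
pose L := lmap a b c d.
have vertex X : exposed (mutation v0 v1 v2 w sF G) X -> [\/ L X = emb u0, L X = emb u1 | L X = emb u2].
  by move=> /(exposed_lmap Hdn HT) /exposed_triangle.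
have Linj X Y : X <> Y -> L X <> L Y by move=> nXY /(lmap_inj Hdn).
have ELL : shift v1 fa (- (- wval w v1)%:~R) = shift v2 fb (- (- wval w v1)%:~R).
  have [//|/eqP nAB] := eqVneq (shift v1 fa (- (- wval w v1)%:~R)) (shift v2 fb (- (- wval w v1)%:~R)).
  exfalso.
  by apply: (pigeonhole4 (Linj _ _ nAB) (Linj _ _ nAC) (Linj _ _ nAD) (Linj _ _ nBC)
    (Linj _ _ nBD) (Linj _ _ nCD) (vertex _ xLL) (vertex _ xLR) (vertex _ xUL) (vertex _ xUR)).
have [x [y [z [Hperm px cyz [R1 R2]]]]] := image_vertices_relation Fu Wu Hdn
  (Linj _ _ nAC) (Linj _ _ nAD) (Linj _ _ nCD) (vertex _ xLL) (vertex _ xUL) (vertex _ xUR).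
have Hh : l0%:R * (wval w v0)%:~R = (l1 + l2)%:R * (- wval w v1)%:~R :> rat.
  have Ei : l0%:Z * wval w v0 = (l1 + l2)%:Z * (- wval w v1).
    apply/eqP; rewrite -subr_eq0 -(weights_heights w Wv) -E12 PoszD; apply/eqP; ring.
  by have := congr1 (fun t : int => t%:~R : rat) Ei; rewrite /= !intrM.
have [S1 S2] := mutation_relation Wv Hh ELL.
have [U1 U2] := relation_unique Hdet2 S1 S2 R1 R2.
have [[pl0 pl1 _ _] _] := Wv; have [pv0 _ _ _] := Fv.
have N1 : (x * (l0 * l1) = (l1 + l2) ^ 2 * y)%N.
  by apply/eqP; rewrite -(eqr_nat rat); apply/eqP; rewrite natrM U1 natrM.
have N2 : (x * (l0 * l2) = (l1 + l2) ^ 2 * z)%N.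
  by apply/eqP; rewrite -(eqr_nat rat); apply/eqP; rewrite natrM U2 natrM.
have [Ey Ez Hdvd Hx] := proportional_weights pl0 pl1 px (weights_coprime Wv pv0) cyz N1 N2.
by split => //; apply: (perm_trans Hperm); rewrite Ey Ez Hx; apply/permP => ? /=; lia.
Qed.

(* After relabelling the vertices, w is minimal exactly on the edge [v1, v2]:
   it takes both signs on the vertices and its minimum is not unique. *)
Lemma relabel_pair_minimum (v0 v1 v2 u0 u1 u2 w : lpt) (l0 l1 l2 : nat)
    (sF : seq lpt) (G : int -> seq lpt) :
  mutation_setting v0 v1 v2 u0 u1 u2 l0 l1 l2 w sF G -> primitive w -> nontrivial sF ->
  exists (p0 p1 p2 : lpt) (k0 k1 k2 : nat),
    [/\ perm_eq [:: k0; k1; k2] [:: l0; l1; l2],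
        mutation_setting p0 p1 p2 u0 u1 u2 k0 k1 k2 w sF G,
        wval w p1 = wval w p2 & wval w p1 < wval w p0].
Proof.
move=> S Hw Hnt.
have no_min p0 p1 p2 k0 k1 k2 : mutation_setting p0 p1 p2 u0 u1 u2 k0 k1 k2 w sF G ->
    wval w p0 < wval w p1 -> wval w p0 < wval w p2 -> False.
  by move=> [Fp _ HF _]; apply: no_unique_minimum Fp Hw HF Hnt.
have S102 := setting_swap01 S; have S201 := setting_swap01 (setting_swap12 S).
case: (ltgtP (wval w v1) (wval w v2)) => E12.
- case: (ltgtP (wval w v1) (wval w v0)) => E10.
  + by case: (no_min _ _ _ _ _ _ S102).
  + by case: (no_min _ _ _ _ _ _ S) => //; apply: lt_trans E12.
  + exists v2, v0, v1, l2, l0, l1; split; rewrite // -?E10 //.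
    by apply/permP => ? /=; lia.
- case: (ltgtP (wval w v2) (wval w v0)) => E20.
  + by case: (no_min _ _ _ _ _ _ S201).
  + by case: (no_min _ _ _ _ _ _ S) => //; apply: lt_trans E12.
  + exists v1, v0, v2, l1, l0, l2; split; rewrite // -?E20 //.
    by apply/permP => ? /=; lia.
- case: (ltgtP (wval w v1) (wval w v0)) => E10.
  + by exists v0, v1, v2, l0, l1, l2.
  + by case: (no_min _ _ _ _ _ _ S) => //; rewrite -E12.
  + exfalso; have [Fv _ _ _] := S; have [Hs1 Hs2] := fano_heights Fv (primitive_neq0 Hw).
    rewrite -E12 -E10 in Hs1 Hs2.
    by case: (leP 0 (wval w v1)) => Hc; [apply: Hs1 | apply: Hs2; split; apply: ltW].
Qed.

Local Close Scope ring_scope.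

Theorem proposition3p2 (v0 v1 v2 u0 u1 u2 : lpt) (l0 l1 l2 m0 m1 m2 : nat) :
  fano_triangle v0 v1 v2 -> fano_triangle u0 u1 u2 ->
  weights v0 v1 v2 l0 l1 l2 -> weights u0 u1 u2 m0 m1 m2 ->
  one_step_mutation v0 v1 v2 u0 u1 u2 ->
  exists a b c : nat,
    [/\ perm_eq [:: a; b; c] [:: l0; l1; l2],
        (a %| (b + c) ^ 2)%N &
        perm_eq [:: m0; m1; m2] [:: b; c; ((b + c) ^ 2 %/ a)%N]].
Proof.
move=> Fv Fu Wv Wu [w [sF [G [Hw HF Hnt Hiso]]]].
have S : mutation_setting v0 v1 v2 u0 u1 u2 l0 l1 l2 w sF G by split.
have [p0 [p1 [p2 [k0 [k1 [k2 [Hperm Sp E12 L10]]]]]]] := relabel_pair_minimum S Hw Hnt.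
have [Hdvd Hm] := pair_minimum_weights Sp Fu Wu Hw Hnt E12 L10.
by exists k0, k1, k2.
Qed.
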